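(* There exists a finite relational structure $\mathcal{A}$ with exactly $3$ elements having a Q-core that is not an induced substructure of $\mathcal{A}$.
   Context: Here positive Horn (pH) sentences are first-order sentences built from relational atoms without equality using only $\exists$, $\forall$, $\wedge$. A substructure of $\mathcal{A}$ is a structure $\mathcal{B}$ whose domain is a subset of $A$ and each of whose relations is a subset of the corresponding relation of $\mathcal{A}$ (not necessarily induced). A Q-core of $\mathcal{A}$ is a substructure $\mathcal{B}$ of $\mathcal{A}$ such that $\mathcal{A}$ and $\mathcal{B}$ satisfy exactly the same pH sentences, and which is minimal under inclusion among substructures of $\mathcal{A}$ with this property. *)

From mathcomp Require Import all_boot.
Set Implicit Arguments. Unset Strict Implicit. Unset Printing Implicit Defensive.

(* A structure over the ambient finite type T: a nonempty domain (a subset of T)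
   together with an interpretation of each relation symbol as a set of tuples. *)
Record structure (n : nat) (ar : 'I_n -> nat) (T : finType) := Structure {
  dom : {set T};
  rel : forall i : 'I_n, {set (ar i).-tuple T}
}.

Definition wf n (ar : 'I_n -> nat) (T : finType) (S : structure ar T) : Prop :=
  (exists a, a \in dom S) /\
  (forall i (t : (ar i).-tuple T), t \in rel S i -> forall a, a \in t -> a \in dom S).

Inductive pHform n (ar : 'I_n -> nat) :=
| Atom (i : 'I_n) (vs : (ar i).-tuple nat)
| Ex (x : nat) (f : pHform ar)
| All (x : nat) (f : pHform ar)
| And (f g : pHform ar).

Fixpoint fvs n (ar : 'I_n -> nat) (f : pHform ar) : seq nat :=
  match f with
  | Atom _ vs => val vs
  | Ex x g => filter (fun y => y != x) (fvs g)
  | All x g => filter (fun y => y != x) (fvs g)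
  | And g h => fvs g ++ fvs h
  end.

Definition sentence n (ar : 'I_n -> nat) (f : pHform ar) : Prop := fvs f = [::].

Definition upd (T : Type) (e : nat -> T) (x : nat) (a : T) : nat -> T :=
  fun y => if y == x then a else e y.

Fixpoint sat n (ar : 'I_n -> nat) (T : finType) (S : structure ar T)
    (e : nat -> T) (f : pHform ar) : Prop :=
  match f with
  | Atom i vs => map_tuple e vs \in rel S i
  | Ex x g => exists a, a \in dom S /\ sat S (upd e x a) g
  | All x g => forall a, a \in dom S -> sat S (upd e x a) g
  | And g h => sat S e g /\ sat S e h
  end.

(* A structure satisfies a sentence (the environment is irrelevant for sentences). *)
Definition holds n (ar : 'I_n -> nat) (T : finType) (S : structure ar T)
    (f : pHform ar) : Prop := forall e, sat S e f.

Definition same_pH n (ar : 'I_n -> nat) (T : finType) (A B : structure ar T) : Prop :=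
  forall f : pHform ar, sentence f -> (holds A f <-> holds B f).

Definition incl n (ar : 'I_n -> nat) (T : finType) (B A : structure ar T) : Prop :=
  dom B \subset dom A /\ forall i, rel B i \subset rel A i.

Definition substructure n (ar : 'I_n -> nat) (T : finType) (B A : structure ar T) : Prop :=
  wf B /\ incl B A.

Definition induced_sub n (ar : 'I_n -> nat) (T : finType) (B A : structure ar T) : Prop :=
  substructure B A /\
  forall i (t : (ar i).-tuple T),
    (t \in rel B i) = (t \in rel A i) && all (fun a => a \in dom B) t.

Definition Qcore n (ar : 'I_n -> nat) (T : finType) (A B : structure ar T) : Prop :=
  substructure B A /\ same_pH A B /\
  forall C : structure ar T, substructure C A -> same_pH A C -> incl C B -> incl B C.

From Pilot Require Import Defs.
From mathcomp Require Import all_boot.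
Set Implicit Arguments. Unset Strict Implicit. Unset Printing Implicit Defensive.

(* pH sentences are preserved along surjective hyper-morphisms: relations R that
   are total on the source, surjective onto the target and map related tuples of
   a relation to tuples of the same relation. Take A on {0, 1, 2} with unary
   relations P0 = {0, 1}, P1 = {0}, and B on {0, 1} with P0 = P1 = {0}. The map
   0, 1 |-> 0, 2 |-> 1 is such a hyper-morphism A -> B, and 0 |-> 0, 1 |-> anything
   is one B -> A, so B has the pH theory of A; B is not induced since 1 is in P0
   in A but not in B. For minimality, a substructure C of B with the theory of A
   satisfies "exists x, P0 x /\ P1 x", which forces P0 0 and P1 0 in C, and
   falsifies "forall x, P0 x", which forces 1 into the domain of C. *)

Section HyperMorphism.
Variables (n : nat) (ar : 'I_n -> nat) (T : finType).

Definition hyper_morphism (R : rel T) (X Y : structure ar T) : Prop :=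
  [/\ forall a, a \in dom X -> exists2 b, b \in dom Y & R a b,
      forall b, b \in dom Y -> exists2 a, a \in dom X & R a b &
      forall i (t u : (ar i).-tuple T), t \in Defs.rel X i ->
        (forall k, R (tnth t k) (tnth u k)) -> u \in Defs.rel Y i].

Lemma rel_upd (R : rel T) (eX eY : nat -> T) x a b (s : seq nat) :
  {in [seq y <- s | y != x], forall y, R (eX y) (eY y)} -> R a b ->
  {in s, forall y, R (upd eX x a y) (upd eY x b y)}.
Proof.
move=> ReXY Rab y sy; rewrite /upd; case: eqP => // /eqP ne_yx.
by apply: ReXY; rewrite mem_filter ne_yx.
Qed.

Lemma sat_hyper_morphism R X Y : hyper_morphism R X Y ->
  forall f eX eY, {in fvs f, forall x, R (eX x) (eY x)} ->
  sat X eX f -> sat Y eY f.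
Proof.
case=> totR surR relR; elim=> [i vs|x g IHg|x g IHg|g IHg h IHh] eX eY ReXY /=.
- by move=> /relR; apply=> k; rewrite !tnth_map; apply/ReXY/mem_tnth.
- case=> a [Xa satg]; have [b Yb Rab] := totR a Xa.
  by exists b; split=> //; apply: IHg satg; apply: rel_upd.
- move=> satg b Yb; have [a Xa Rab] := surR b Yb.
  by apply: IHg (satg a Xa); apply: rel_upd.
- by case=> satg sath; split; [apply: IHg satg | apply: IHh sath] => y fy;
    apply: ReXY; rewrite mem_cat fy ?orbT.
Qed.

Lemma holds_hyper_morphism R X Y f :
  hyper_morphism R X Y -> sentence f -> holds X f -> holds Y f.
Proof.
move=> homR closed_f holdsX e.
by move: (holdsX e); apply: (sat_hyper_morphism homR) => x; rewrite closed_f.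
Qed.

Lemma same_pH_hyper_morphisms R R' X Y :
  hyper_morphism R X Y -> hyper_morphism R' Y X -> same_pH X Y.
Proof.
move=> homR homR' f closed_f.
by split; [exact: (holds_hyper_morphism homR) | exact: (holds_hyper_morphism homR')].
Qed.

End HyperMorphism.

Lemma tuple1_thead (T : Type) (t : 1.-tuple T) : t = [tuple thead t].
Proof. by apply: eq_from_tnth => k; rewrite (ord1 k). Qed.

Section UnaryStructures.
Variables (n : nat) (T : finType).

Definition unary_ar : 'I_n -> nat := fun=> 1%N.

Definition unary_structure (D : {set T}) (P : 'I_n -> pred T) : structure unary_ar T :=
  Structure D (fun i => [set t : 1.-tuple T | P i (thead t)]).

Lemma mem_unary_rel (D : {set T}) (P : 'I_n -> pred T) i (t : 1.-tuple T) :
  (t \in Defs.rel (unary_structure D P) i) = P i (thead t).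
Proof. by rewrite inE. Qed.

Lemma wf_unary_structure (D : {set T}) (P : 'I_n -> pred T) a :
  a \in D -> (forall i, {subset P i <= D}) -> wf (unary_structure D P).
Proof.
move=> Da PD; split; first by exists a.
move=> i t; rewrite mem_unary_rel [t]tuple1_thead => Pt b.
by rewrite inE => /eqP ->; apply: PD Pt.
Qed.

Lemma hyper_morphism_unary (R : rel T) (D D' : {set T}) (P P' : 'I_n -> pred T) :
  (forall a, a \in D -> exists2 b, b \in D' & R a b) ->
  (forall b, b \in D' -> exists2 a, a \in D & R a b) ->
  (forall i a b, P i a -> R a b -> P' i b) ->
  hyper_morphism R (unary_structure D P) (unary_structure D' P').
Proof.
move=> totR surR relR; split=> // i t u; rewrite !mem_unary_rel => Pt Rtu.
exact: relR Pt (Rtu ord0).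
Qed.

Definition ex_both (i j : 'I_n) : pHform unary_ar :=
  Ex 0 (And (@Atom n unary_ar i [tuple 0%N]) (@Atom n unary_ar j [tuple 0%N])).

Definition all_in (i : 'I_n) : pHform unary_ar := All 0 (@Atom n unary_ar i [tuple 0%N]).

Lemma sat_atom1 (S : structure unary_ar T) e i x :
  sat S e (@Atom n unary_ar i [tuple x]) <-> [tuple e x] \in Defs.rel S i.
Proof. by rewrite /= (_ : map_tuple _ _ = [tuple e x]) //; apply: val_inj. Qed.

Lemma sat_ex_both (S : structure unary_ar T) e i j :
  sat S e (ex_both i j) <->
  exists2 a, a \in dom S & [tuple a] \in Defs.rel S i /\ [tuple a] \in Defs.rel S j.
Proof.
split.
- by case=> a [Sa [/sat_atom1 Si /sat_atom1 Sj]]; exists a.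
- case=> a Sa [Si Sj]; exists a; split=> //.
  by split; apply/(sat_atom1 _ (upd e 0 a) _ 0).
Qed.

Lemma sat_all_in (S : structure unary_ar T) e i :
  sat S e (all_in i) <-> {in dom S, forall a, [tuple a] \in Defs.rel S i}.
Proof.
split=> Si a Sa; first exact/(sat_atom1 _ (upd e 0 a) _ 0)/Si.
exact/(sat_atom1 _ (upd e 0 a) _ 0)/Si.
Qed.

End UnaryStructures.

Definition x0 : 'I_3 := ord0.
Definition x1 : 'I_3 := Ordinal (isT : 1 < 3).
Definition x2 : 'I_3 := ord_max.

Lemma I3_ind (P : 'I_3 -> Prop) : P x0 -> P x1 -> P x2 -> forall a, P a.
Proof.
move=> Px0 Px1 Px2 [[|[|[|//]]] lt_a3];
  [move: Px0 | move: Px1 | move: Px2]; congr P; exact: val_inj.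
Qed.

Definition P0 : 'I_2 := ord0.
Definition P1 : 'I_2 := ord_max.

Lemma I2_cases (i : 'I_2) : i = P0 \/ i = P1.
Proof. by case: i => [[|[|//]] lt_i2]; [left | right]; apply: val_inj. Qed.

Definition strA :=
  unary_structure [set: 'I_3] (fun i a => (a == x0) || (a == x1) && (i == P0)).
Definition strB := unary_structure [set x0; x1] (fun (_ : 'I_2) a => a == x0).

Lemma wf_strA : wf strA.
Proof. by apply: (wf_unary_structure (a := x0)) => // i a; rewrite inE. Qed.

Lemma wf_strB : wf strB.
Proof. by apply: (wf_unary_structure (a := x0)) => [|i a /eqP ->]; rewrite !inE. Qed.

Lemma strB_sub_strA : substructure strB strA.
Proof.
split; first exact: wf_strB.
split=> [|i]; first exact: subsetT.
by apply/subsetP=> t; rewrite !mem_unary_rel => ->.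
Qed.

Lemma strB_not_induced : ~ induced_sub strB strA.
Proof. by case=> _ /(_ P0 [tuple x1]); rewrite !mem_unary_rel /= !inE. Qed.

Lemma same_pH_strA_strB : same_pH strA strB.
Proof.
apply: (@same_pH_hyper_morphisms _ _ _
  [rel a b | b == (if a == x2 then x1 else x0)] [rel b a | (b == x1) || (a == x0)]).
- apply: hyper_morphism_unary.
  + by elim/I3_ind=> _; [exists x0 | exists x0 | exists x1]; rewrite ?inE.
  + by elim/I3_ind; rewrite ?inE // => _; [exists x0 | exists x2]; rewrite ?inE.
  + by move=> i a b; elim/I3_ind: a; elim/I3_ind: b.
- apply: hyper_morphism_unary.
  + by elim/I3_ind; rewrite ?inE // => _; [exists x0 | exists x0]; rewrite ?inE.
  + by elim/I3_ind=> _; [exists x0 | exists x1 | exists x1]; rewrite ?inE.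
  + by move=> i a b; elim/I3_ind: a; elim/I3_ind: b.
Qed.

Lemma Qcore_strB : Qcore strA strB.
Proof.
split; first exact: strB_sub_strA.
split; first exact: same_pH_strA_strB.
move=> C _ sameC [domCB relCB].
have [a Ca [C0a C1a]] : exists2 a, a \in dom C &
    [tuple a] \in Defs.rel C P0 /\ [tuple a] \in Defs.rel C P1.
  have A_ex_both : holds strA (ex_both P0 P1).
    by move=> e; apply/sat_ex_both; exists x0; rewrite ?mem_unary_rel ?inE.
  apply/(sat_ex_both _ (fun=> x0)).
  exact: (sameC (ex_both P0 P1) erefl).1 A_ex_both (fun=> x0).
have a_x0 : a = x0.
  by apply/eqP; move: (subsetP (relCB P0) _ C0a); rewrite mem_unary_rel.
subst a.
have C_x1 : x1 \in dom C.
  apply: contraT => C'x1.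
  have CP0 : holds C (all_in P0).
    move=> e; apply/sat_all_in => a Ca'.
    have := subsetP domCB a Ca'; rewrite !inE => /orP[] /eqP a_x; subst a => //.
    by rewrite Ca' in C'x1.
  have /sat_all_in/(_ x2) := (sameC (all_in P0) erefl).2 CP0 (fun=> x0).
  by rewrite mem_unary_rel inE => /(_ isT).
split.
  by apply/subsetP=> a; rewrite !inE => /orP[] /eqP ->.
move=> i; apply/subsetP => t; rewrite mem_unary_rel => /eqP t_x0.
by rewrite [t]tuple1_thead t_x0; case: (I2_cases i) => ->.
Qed.

Theorem mainTheorem17 :
  exists (n : nat) (ar : 'I_n -> nat) (T : finType) (A B : structure ar T),
    wf A /\ #|dom A| = 3 /\ Qcore A B /\ ~ induced_sub B A.
Proof.
exists 2, (@unary_ar 2), (ordinal 3), strA, strB.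
split; first exact: wf_strA.
split; first by rewrite cardsT card_ord.
by split; [exact: Qcore_strB | exact: strB_not_induced].
Qed.
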